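(* There exists an absolute constant $C\ge1$ such that for every $n\ge1$ and every two complementary intervals $I,J$ of $F_n$ in $[0,1]$ that are separated by at most two adjacent complementary intervals of $F_n$, one has \[\frac{1}{Cn}\le\frac{|I|}{|J|}\le Cn,\] where $|\cdot|$ denotes Euclidean length.
   Context: Define finite subsets $F_n\subset[0,1]$ of rationals: $F_0=\{0/1,1/1\}$, and $F_n$ is obtained from $F_{n-1}$ by inserting, between each pair of consecutive elements $p/q<r/s$ (in lowest terms), the mediant $(p+r)/(q+s)$. The complementary intervals of $F_n$ are the open intervals between consecutive elements of $F_n$. ''Separated by at most two adjacent complementary intervals'' means that between $I$ and $J$ there are zero, one, or two complementary intervals of $F_n$. *)

From mathcomp Require Import all_boot all_order all_algebra.
Set Implicit Arguments. Unset Strict Implicit. Unset Printing Implicit Defensive.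
Import Order.TTheory GRing.Theory Num.Theory.
Local Open Scope ring_scope.

Definition mediant (a b : rat) : rat :=
  ((numq a + numq b)%:~R / (denq a + denq b)%:~R)%R.

Fixpoint insert_mediants (s : seq rat) : seq rat :=
  match s with
  | x :: ((y :: _) as t) => x :: mediant x y :: insert_mediants t
  | _ => s
  end.

Definition F (n : nat) : seq rat := iter n insert_mediants [:: 0; 1].

(* Length of the i-th complementary interval of F_n, i.e. of
   (F_n[i], F_n[i+1]), for i < size (F n) - 1. *)
Definition clen (n i : nat) : rat := nth 0 (F n) i.+1 - nth 0 (F n) i.

(* Consecutive elements p/q < r/s of F_n satisfy rq - ps = 1, so their mediant
   is already in lowest terms and the complementary interval (p/q, r/s) has
   length 1/(qs).  Hence the denominators of F_(n+1) are obtained from those of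
   F_n by inserting the sum of every adjacent pair, and |I|/|J| is a ratio of
   products of adjacent denominators.  By induction on n, adjacent denominators
   of F_n are within a factor n+1 of each other, and adjacent pair sums q+s
   within a factor 2.  An interval of F_(n+1) is a half of an interval of F_n
   with pair sum M, and its denominator product lies between M^2/(n+2) and M^2;
   intervals of F_(n+1) at distance at most 3 are halves of intervals of F_n at
   distance at most 2, whose pair sums agree up to a factor 4.  This gives the
   constant 16(n+2) <= 32(n+1). *)

From mathcomp Require Import all_boot all_order all_algebra.
From mathcomp Require Import zify ring lra.
Set Implicit Arguments. Unset Strict Implicit. Unset Printing Implicit Defensive.
Import Order.TTheory GRing.Theory Num.Theory.
Local Open Scope ring_scope.

Fixpoint insert_sums (V : nmodType) (s : seq V) : seq V :=
  match s with
  | x :: ((y :: _) as t) => x :: x + y :: insert_sums t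
  | _ => s
  end.
Arguments insert_sums : simpl nomatch.

Section InsertSums.
Variable V : nmodType.
Implicit Types s : seq V.

Lemma size_insert_sums s : size (insert_sums s) = (size s + (size s).-1)%N.
Proof. by elim: s => [|x [|y s] IHs] //=; rewrite IHs /=; lia. Qed.

Lemma double_lt_size_insert_sums s t :
  (t.*2 < size (insert_sums s))%N = (t < size s)%N.
Proof. by rewrite size_insert_sums; lia. Qed.

Lemma doubleS_lt_size_insert_sums s t :
  (t.*2.+1 < size (insert_sums s))%N = (t.+1 < size s)%N.
Proof. by rewrite size_insert_sums; lia. Qed.

Lemma half_lt_size_insert_sums s u :
  (u.+1 < size (insert_sums s))%N -> (u./2.+1 < size s)%N.
Proof. by rewrite size_insert_sums; lia. Qed.

Lemma nth_insert_sums_double s t :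
  (t < size s)%N -> (insert_sums s)`_t.*2 = s`_t.
Proof.
elim: s t => [|x [|y s] IHs] [|t] // lt_t_s.
by rewrite doubleS; apply: IHs.
Qed.

Lemma nth_insert_sums_doubleS s t :
  (t.+1 < size s)%N -> (insert_sums s)`_t.*2.+1 = s`_t + s`_t.+1.
Proof.
elim: s t => [|x [|y s] IHs] [|t] // lt_t_s.
by rewrite doubleS; apply: IHs.
Qed.

End InsertSums.

Lemma double_or_doubleS u : exists t, u = t.*2 \/ u = t.*2.+1.
Proof.
by exists u./2; rewrite -{1 3}[u]odd_double_half; case: (odd u); [right|left].
Qed.

Section RatioBounds.
Variable R : realDomainType.

Definition ratio_bounded (c : R) (f : nat -> R) (n : nat) :=
  forall t, (t.+1 < n)%N -> f t.+1 <= c * f t /\ f t <= c * f t.+1.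

Lemma ratio_bounded_exp c f n i d : 0 <= c -> ratio_bounded c f n ->
  (i + d < n)%N -> f (i + d)%N <= c ^+ d * f i /\ f i <= c ^+ d * f (i + d)%N.
Proof.
move=> c_ge0 fc; elim: d => [|d IHd] lt_id_n; first by rewrite addn0 mul1r.
rewrite addnS in lt_id_n *.
have [le_d_i le_i_d] := IHd (ltnW lt_id_n).
have [le_Sd_d le_d_Sd] := fc (i + d)%N lt_id_n.
have cd_ge0 : 0 <= c ^+ d by rewrite exprn_ge0.
by rewrite exprS; split; nra.
Qed.

Lemma ratio_bounded_near c f n k i j : 1 <= c -> ratio_bounded c f n ->
  0 <= f i -> (i < n)%N -> (j < n)%N -> (i <= j + k)%N -> (j <= i + k)%N ->
  f j <= c ^+ k * f i.
Proof.
move=> c_ge1 fc fi_ge0 lt_i_n lt_j_n le_i_jk le_j_ik.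
have c_ge0 : 0 <= c by rewrite (le_trans ler01).
have c_exp d : (d <= k)%N -> c ^+ d <= c ^+ k by apply: ler_weXn2l.
case: (leqP i j) => [le_ij | /ltnW le_ji].
  have := ratio_bounded_exp (i := i) (d := j - i) c_ge0 fc.
  rewrite subnKC // => /(_ lt_j_n) [le_fj _]; apply: le_trans le_fj _.
  by rewrite ler_wpM2r // c_exp // leq_subLR.
have := ratio_bounded_exp (i := j) (d := i - j) c_ge0 fc.
rewrite subnKC // => /(_ lt_i_n) [_ le_fj]; apply: le_trans le_fj _.
by rewrite ler_wpM2r // c_exp // leq_subLR.
Qed.

Definition adj_sum (s : seq R) t := s`_t + s`_t.+1.
Definition adj_prod (s : seq R) t := s`_t * s`_t.+1.

End RatioBounds.

Section InsertSumsBounds.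
Variables (R : realDomainType) (s : seq R).
Hypothesis s_gt0 : forall t, (t < size s)%N -> 0 < s`_t.

Local Notation s' := (insert_sums s).

Lemma ratio_bounded_insert_sums c : 0 <= c ->
  ratio_bounded c (nth 0 s) (size s) ->
  ratio_bounded (c + 1) (nth 0 s') (size s').
Proof.
move=> c_ge0 sc u; have [t [-> | ->]] := double_or_doubleS u.
  rewrite doubleS_lt_size_insert_sums => lt_t; have lt_t' := ltnW lt_t.
  have [a_gt0 b_gt0] := (s_gt0 lt_t', s_gt0 lt_t).
  have [le_ba le_ab] := sc _ lt_t.
  rewrite nth_insert_sums_doubleS // nth_insert_sums_double //.
  by split; nra.
rewrite -doubleS double_lt_size_insert_sums => lt_t; have lt_t' := ltnW lt_t.
have [a_gt0 b_gt0] := (s_gt0 lt_t', s_gt0 lt_t).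
have [le_ba le_ab] := sc _ lt_t.
rewrite nth_insert_sums_doubleS // nth_insert_sums_double //.
by split; nra.
Qed.

Lemma adj_sum_ratio_insert_sums :
  ratio_bounded 2 (adj_sum s) (size s).-1 ->
  ratio_bounded 2 (adj_sum s') (size s').-1.
Proof.
rewrite /adj_sum => sc u; rewrite ltn_predRL.
have [t [-> | ->]] := double_or_doubleS u; rewrite -doubleS.
  rewrite double_lt_size_insert_sums => lt_t; have lt_t' := ltnW lt_t.
  have [a_gt0 b_gt0] := (s_gt0 lt_t', s_gt0 lt_t).
  rewrite nth_insert_sums_doubleS // !nth_insert_sums_double //.
  by split; lra.
rewrite doubleS_lt_size_insert_sums => lt_t; have lt_t' := ltnW lt_t.
have [a_gt0 b_gt0] := (s_gt0 (ltnW lt_t'), s_gt0 lt_t').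
have /sc[le_bc_ab le_ab_bc] : (t.+1 < (size s).-1)%N by rewrite ltn_predRL.
rewrite !nth_insert_sums_doubleS // nth_insert_sums_double //.
by split; lra.
Qed.

Lemma adj_prod_insert_sums_bounds c u : 0 <= c ->
  ratio_bounded c (nth 0 s) (size s) -> (u.+1 < size s')%N ->
  adj_prod s' u <= adj_sum s u./2 ^+ 2 /\
  adj_sum s u./2 ^+ 2 <= (c + 1) * adj_prod s' u.
Proof.
move=> c_ge0 sc; rewrite /adj_prod /adj_sum.
have [t [-> | ->]] := double_or_doubleS u; rewrite /= ?doubleK ?uphalf_double.
  rewrite doubleS_lt_size_insert_sums => lt_t; have lt_t' := ltnW lt_t.
  have [a_gt0 b_gt0] := (s_gt0 lt_t', s_gt0 lt_t).
  have [le_ba le_ab] := sc _ lt_t.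
  rewrite nth_insert_sums_doubleS // nth_insert_sums_double //.
  by split; nra.
rewrite -doubleS double_lt_size_insert_sums => lt_t; have lt_t' := ltnW lt_t.
have [a_gt0 b_gt0] := (s_gt0 lt_t', s_gt0 lt_t).
have [le_ba le_ab] := sc _ lt_t.
rewrite nth_insert_sums_doubleS // nth_insert_sums_double //.
by split; nra.
Qed.

Lemma adj_prod_insert_sums_near c u v : 0 <= c ->
  ratio_bounded c (nth 0 s) (size s) ->
  ratio_bounded 2 (adj_sum s) (size s).-1 ->
  (u.+1 < size s')%N -> (v.+1 < size s')%N ->
  (u <= v + 3)%N -> (v <= u + 3)%N ->
  adj_prod s' v <= 16 * (c + 1) * adj_prod s' u.
Proof.
move=> c_ge0 sc s2 lt_u lt_v le_uv le_vu.
have adj_sum_ge0 w : (w.+1 < size s)%N -> 0 <= adj_sum s w.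
  by move=> lt_w; rewrite addr_ge0 // ltW // s_gt0 // ltnW.
have [lt_tu lt_tv] := (half_lt_size_insert_sums lt_u, half_lt_size_insert_sums lt_v).
have [Mu_ge0 Mv_ge0] := (adj_sum_ge0 _ lt_tu, adj_sum_ge0 _ lt_tv).
have [Pu_le Pu_ge] := adj_prod_insert_sums_bounds c_ge0 sc lt_u.
have [Pv_le _] := adj_prod_insert_sums_bounds c_ge0 sc lt_v.
have : adj_sum s v./2 <= 2 ^+ 2 * adj_sum s u./2.
  by apply: (ratio_bounded_near _ s2); rewrite ?ler1n ?ltn_predRL //; lia.
nra.
Qed.

End InsertSumsBounds.

Lemma div_bounds_of_le_mul (R : realFieldType) (a b c : R) : 0 < a -> 0 < b ->
  b <= c * a -> a <= c * b -> 1 / c <= b / a /\ b / a <= c.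
Proof.
move=> a_gt0 b_gt0 le_b le_a; have c_gt0 : 0 < c by nra.
split; last by rewrite ler_pdivrMr.
by rewrite div1r -invf_div lef_pV2 ?posrE ?divr_gt0 // ler_pdivrMr.
Qed.

Definition farey_adj (x y : rat) : bool :=
  numq y * denq x - numq x * denq y == 1.

Lemma numq_denq_mediant x y : farey_adj x y ->
  numq (mediant x y) = numq x + numq y /\ denq (mediant x y) = denq x + denq y.
Proof.
move=> /eqP det1.
have den_gt0 : 0 < denq x + denq y by rewrite addr_gt0.
have cop : coprime (absz (numq x + numq y)) (absz (denq x + denq y)).
  by apply/coprimezP; exists (denq x, - numq x) => /=; rewrite -det1; ring.
rewrite /mediant (coprimeq_num cop) (coprimeq_den cop) gtr0_sg // mul1r.
by rewrite gtr0_norm // (negbTE (lt0r_neq0 den_gt0)).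
Qed.

Lemma farey_adj_mediant x y : farey_adj x y ->
  farey_adj x (mediant x y) && farey_adj (mediant x y) y.
Proof.
move=> xy; have [num_m den_m] := numq_denq_mediant xy.
move: xy; rewrite /farey_adj num_m den_m => /eqP det1.
by apply/andP; split; apply/eqP; rewrite -det1; ring.
Qed.

Lemma sub_farey_adj x y : farey_adj x y ->
  y - x = ((denq x)%:~R * (denq y)%:~R)^-1.
Proof.
move=> /eqP det1.
have [dx dy] : (denq x)%:~R != 0 :> rat /\ (denq y)%:~R != 0 :> rat.
  by rewrite !intr_eq0 !denq_neq0.
have det1_rat :
    (numq y)%:~R * (denq x)%:~R - (numq x)%:~R * (denq y)%:~R = 1 :> rat.
  by rewrite -!intrM -intrB det1.
rewrite -[RHS]mul1r -{1}det1_rat.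
rewrite -[in LHS](divq_num_den x) -[in LHS](divq_num_den y).
by field; rewrite dx dy.
Qed.

Arguments insert_mediants : simpl nomatch.

Definition dens (s : seq rat) : seq rat := [seq (denq x)%:~R | x <- s].

Lemma sorted_farey_insert_mediants s :
  sorted farey_adj s -> sorted farey_adj (insert_mediants s).
Proof.
elim: s => [|x [|y s] IHs] //= /andP[xy ys].
have /andP[-> my] := farey_adj_mediant xy.
by move: IHs ys; case: s => [|z s] IHs ys /=; rewrite my //; apply: IHs.
Qed.

Lemma dens_insert_mediants s :
  sorted farey_adj s -> dens (insert_mediants s) = insert_sums (dens s).
Proof.
elim: s => [|x [|y s] IHs] //= /andP[xy ys].
by have [_ ->] := numq_denq_mediant xy; rewrite intrD IHs.
Qed.

Lemma dens_gt0 s t : (t < size (dens s))%N -> 0 < (dens s)`_t.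
Proof. by rewrite size_map => lt_t; rewrite (nth_map 0) // ltr0z denq_gt0. Qed.

Lemma adj_prod_dens_gt0 s t : (t.+1 < size s)%N -> 0 < adj_prod (dens s) t.
Proof. by move=> lt_t; rewrite mulr_gt0 // dens_gt0 // size_map // ltnW. Qed.

Lemma sorted_farey_F n : sorted farey_adj (F n).
Proof.
by elim: n => [|n IHn] //; rewrite /F iterS sorted_farey_insert_mediants.
Qed.

Lemma dens_F_succ n : dens (F n.+1) = insert_sums (dens (F n)).
Proof. by rewrite /F iterS dens_insert_mediants // sorted_farey_F. Qed.

Lemma ratio_bounded_dens_F n :
  ratio_bounded (n%:R + 1) (nth 0 (dens (F n))) (size (dens (F n))).
Proof.
elim: n => [|n IHn]; first by case=> [|t] //= _.
rewrite dens_F_succ -natr1.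
apply: (ratio_bounded_insert_sums (@dens_gt0 (F n)) _ IHn).
by rewrite addr_ge0.
Qed.

Lemma adj_sum_ratio_dens_F n :
  ratio_bounded 2 (adj_sum (dens (F n))) (size (dens (F n))).-1.
Proof.
elim: n => [|n IHn]; first by case.
by rewrite dens_F_succ; apply: (adj_sum_ratio_insert_sums (@dens_gt0 (F n))).
Qed.

Lemma clen_adj_prod n i :
  (i.+1 < size (F n))%N -> clen n i = (adj_prod (dens (F n)) i)^-1.
Proof.
move=> lt_i; rewrite /clen sub_farey_adj; last exact: (sortedP 0 (sorted_farey_F n)).
by rewrite /adj_prod !(nth_map 0) // ltnW.
Qed.

Lemma adj_prod_dens_F_near m i j :
  (i.+1 < size (F m.+1))%N -> (j.+1 < size (F m.+1))%N ->
  (i <= j + 3)%N -> (j <= i + 3)%N ->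
  adj_prod (dens (F m.+1)) j <= 32 * m.+1%:R * adj_prod (dens (F m.+1)) i.
Proof.
move=> lt_i lt_j le_ij le_ji.
have Pi_ge0 := ltW (adj_prod_dens_gt0 lt_i).
have m_ge0 : 0 <= m%:R :> rat := ler0n _ m.
have := adj_prod_insert_sums_near (@dens_gt0 (F m)) (addr_ge0 m_ge0 ler01)
  (@ratio_bounded_dens_F m) (@adj_sum_ratio_dens_F m).
rewrite -dens_F_succ !size_map => /(_ _ _ lt_i lt_j le_ij le_ji).
by rewrite -natr1; nra.
Qed.

Theorem proposition9p3 :
  exists C : rat, 1 <= C /\
    forall (n i j : nat), (1 <= n)%N ->
      (i.+1 < size (F n))%N -> (j.+1 < size (F n))%N ->
      (i <= j + 3)%N -> (j <= i + 3)%N ->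
      1 / (C * n%:R) <= clen n i / clen n j /\
      clen n i / clen n j <= C * n%:R.
Proof.
exists 32; split=> [|n i j n_gt0 lt_i lt_j le_ij le_ji]; first by rewrite ler1n.
have [m n_eq] : exists m, n = m.+1 by exists n.-1; rewrite prednK.
subst n.
rewrite (clen_adj_prod lt_i) (clen_adj_prod lt_j) invrK [_^-1 * _]mulrC.
apply: (div_bounds_of_le_mul (adj_prod_dens_gt0 lt_i) (adj_prod_dens_gt0 lt_j)).
  exact: (adj_prod_dens_F_near lt_i lt_j le_ij le_ji).
exact: (adj_prod_dens_F_near lt_j lt_i le_ji le_ij).
Qed.
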